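(* Let $\eta,\delta,M$ be integers greater than $1$ and let $f$ be a positive integer, with $\gcd(\eta,\delta)=1$ (so that $\mu=\eta/\delta$ is an irreducible fraction). Suppose that $$(\delta f)^{2}-M(\eta+\delta)^{2}=\delta^{2}\,\frac{M+1}{3},$$ equivalently $M=\dfrac{\delta^{2}(3f^{2}-1)}{3(\eta+\delta)^{2}+\delta^{2}}$, and suppose moreover that $M$ is a number of terms for which a sum of $M$ consecutive squares can be a perfect square, i.e. there is an integer $a\geq 1$ such that $\sum_{i=0}^{M-1}(a+i)^{2}$ is a perfect square. Then $\eta\equiv 1 \pmod 2$ and $\delta\equiv 0,1$ or $5 \pmod 6$; furthermore, if $\delta\equiv 0\pmod 6$ then $M\equiv 0\pmod{12}$, and if $\delta\equiv 1$ or $5\pmod 6$ then $M\equiv 2 \pmod{12}$ when $f$ is odd and $M\equiv 11\pmod{12}$ when $f$ is even. More precisely, $(\delta,\eta,f,M)$ satisfy one of the following: (a) $\delta\equiv 0\pmod{36}$, $\eta\equiv 1$ or $5\pmod 6$, $f$ arbitrary, $M\equiv 0\pmod{144}$; (b) $\delta\equiv 12$ or $24\pmod{36}$, $\eta\equiv 1$ or $5\pmod 6$, $f$ arbitrary, $M\equiv 96\pmod{144}$; (c) $\delta\equiv 6$ or $30\pmod{36}$, $\eta\equiv 1$ or $5\pmod 6$, $f\equiv 1\pmod 2$, $M\equiv 24\pmod{144}$; (d) $\delta\equiv 18\pmod{36}$, $\eta\equiv 1$ or $5\pmod 6$, $f\equiv 1\pmod 2$, $M\equiv 72\pmod{144}$;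 (e) $\delta\equiv 1\pmod 6$: if $f\equiv 1$ or $5\pmod 6$, then $M\equiv 50\pmod{72}$ when $\eta\equiv 1$ or $3\pmod 6$, and $M\equiv 2\pmod{72}$ when $\eta\equiv 5\pmod 6$; if $f\equiv 3\pmod 6$, then $M\equiv 2\pmod{72}$ when $\eta\equiv 1$ or $3\pmod 6$, and $M\equiv 26\pmod{72}$ when $\eta\equiv 5\pmod 6$; if $f\equiv 0\pmod 6$, then $M\equiv 11\pmod{36}$ when $\eta\equiv 1$ or $3\pmod 6$, and $M\equiv 35\pmod{36}$ when $\eta\equiv 5\pmod 6$; if $f\equiv 2$ or $4\pmod 6$, then $M\equiv 23\pmod{36}$ when $\eta\equiv 1$ or $3\pmod 6$, and $M\equiv 11\pmod{36}$ when $\eta\equiv 5\pmod 6$; (f) $\delta\equiv 5\pmod 6$: if $f\equiv 1$ or $5\pmod 6$, then $M\equiv 2\pmod{72}$ when $\eta\equiv 1\pmod 6$, and $M\equiv 50\pmod{72}$ when $\eta\equiv 3$ or $5\pmod 6$; if $f\equiv 3\pmod 6$, then $M\equiv 26\pmod{72}$ when $\eta\equiv 1\pmod 6$, and $M\equiv 2\pmod{72}$ when $\eta\equiv 3$ or $5\pmod 6$; if $f\equiv 0\pmod 6$, then $M\equiv 35\pmod{36}$ when $\eta\equiv 1\pmod 6$, and $M\equiv 11\pmod{36}$ when $\eta\equiv 3$ or $5\pmod 6$; if $f\equiv 2$ or $4\pmod 6$, then $M\equiv 11\pmod{36}$ when $\eta\equiv 1\pmod 6$, and $M\equiv 23\pmod{36}$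 when $\eta\equiv 3$ or $5\pmod 6$.
   Context: Setting: for $\mu=\eta/\delta$, two positive integers $a_1,a_2$ with $a_1+a_2=\mu M+1$ and $a_2-a_1=f$ form a ''pair'' for the number of terms $M$; when $M=\delta^2(3f^2-1)/(3(\eta+\delta)^2+\delta^2)$ the sums $\sum_{i=0}^{M-1}(a_j+i)^2$ ($j=1,2$) are perfect squares. It is known from earlier work (cited, not proved in this paper) that a sum of $M>1$ consecutive squares $\sum_{i=0}^{M-1}(a+i)^2$ with $a\ge 1$ can be a perfect square only if $M\equiv 0$ or $24\pmod{72}$, or $M\equiv 1,2$ or $16\pmod{24}$, or $M\equiv 9$ or $33\pmod{72}$, or $M\equiv 11\pmod{12}$; in particular $M\equiv 0,1,2,4,9$ or $11\pmod{12}$. *)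

From mathcomp Require Import all_boot.
Set Implicit Arguments. Unset Strict Implicit. Unset Printing Implicit Defensive.

Definition consec_sq_square (M : nat) : Prop :=
  exists a s : nat, 1 <= a /\ \sum_(i < M) (a + i) ^ 2 = s ^ 2.

From mathcomp Require Import all_boot all_algebra finfield zify.
Import GRing.Theory.

Set Implicit Arguments.
Unset Strict Implicit.
Unset Printing Implicit Defensive.

(* Cleared of denominators, the hypothesis reads
     M (3 (eta + delta)^2 + delta^2) + delta^2 = 3 delta^2 f^2.
   The parity of eta and all congruences on M are read off this equation
   modulo 4, 8 and 9 (when delta = 6k, off the equation satisfied by M / 12),
   each of these finite facts being checked on residues.  The residues
   delta = 2, 3, 4 (mod 6) are impossible: then 3 (eta + delta)^2 + delta^2
   (or its third) is 3 mod 4, hence has a prime factor q = 3 (mod 4), and the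
   equation makes q divide (delta f)^2 + (eta + delta)^2; as -1 is not a
   square mod q, q divides eta + delta and then both eta and delta. *)

Definition pair_eqn (e d f M : nat) : Prop :=
  M * (3 * (e + d) ^ 2 + d ^ 2) + d ^ 2 = 3 * d ^ 2 * f ^ 2.

Lemma sum_consec_sq a n :
  6 * \sum_(i < n.+1) (a + i) ^ 2 =
  n.+1 * n * (2 * n + 1) + 6 * a * n.+1 * n + 6 * a ^ 2 * n.+1.
Proof.
elim: n => [|n IHn]; first by rewrite big_ord1 /=; lia.
by rewrite big_ord_recr /= mulnDr IHn; nia.
Qed.

(* For M = 8k + 4 the sum is 2 mod 4. *)
Lemma consec_sq_square_mod8 M : consec_sq_square M -> M %% 8 != 4.
Proof.
move=> [a [s [_ sum_eq]]]; apply/eqP => M_mod8.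
have [k def_M] : exists k, M = (8 * k + 3).+1 by exists (M %/ 8); lia.
have := sum_consec_sq a (8 * k + 3); rewrite -def_M sum_eq.
have [r [->|->]] : exists r, s = 2 * r \/ s = 2 * r + 1 by exists s./2; lia.
all: lia.
Qed.

Lemma sqrn_mod4 n : n ^ 2 %% 4 = odd n.
Proof.
have [k [->|->]] : exists k, n = 2 * k \/ n = 2 * k + 1 by exists n./2; lia.
all: lia.
Qed.

Lemma prime_divisor_3mod4 u :
  u %% 4 = 3 -> exists2 q, prime q & (q %| u) && (q %% 4 == 3).
Proof.
elim/ltn_ind: u => u IH u_mod4.
have u_gt1 : 1 < u by lia.
have p_pr := pdiv_prime u_gt1; have p_dvd := pdiv_dvd u.
have [p_mod4 | p_mod4] := eqVneq (pdiv u %% 4) 3.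
  by exists (pdiv u); rewrite ?p_dvd ?p_mod4.
have {}p_mod4 : pdiv u %% 4 = 1.
  have : ~~ (2 %| pdiv u) by apply/negP => /dvdn_trans/(_ p_dvd); lia.
  lia.
have div_lt : u %/ pdiv u < u by rewrite ltn_Pdiv ?prime_gt1 //; lia.
have div_mod4 : u %/ pdiv u %% 4 = 3.
  by rewrite -(divnK p_dvd) -modnMm p_mod4 muln1 modn_mod in u_mod4.
have [q q_pr /andP[q_dvd q_mod4]] := IH _ div_lt div_mod4.
by exists q; rewrite // q_mod4 (dvdn_trans q_dvd) ?dvdn_div.
Qed.

(* Otherwise t = x / y in 'F_q satisfies t^2 = -1, and for q = 4k + 3 this gives
   t = t^q = (t^2)^(2k+1) t = -t. *)
Lemma prime_3mod4_dvd_sum_sq q x y :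
  prime q -> q %% 4 = 3 -> q %| x ^ 2 + y ^ 2 -> q %| y.
Proof.
move=> q_pr q_mod4 q_dvd; apply/negPn/negP => q_ndvd_y.
have q_char := pchar_Fp q_pr.
have y_neq0 : (y%:R : 'F_q)%R != 0%R by rewrite -(dvdn_pcharf q_char).
pose t : 'F_q := (x%:R / y%:R)%R.
have x_sq : ((x%:R : 'F_q) ^+ 2 = - y%:R ^+ 2)%R.
  by apply/eqP; rewrite -addr_eq0 -!natrX -natrD -(dvdn_pcharf q_char).
have t_sq : (t ^+ 2 = -1)%R by rewrite expr_div_n x_sq mulNr divff ?expf_neq0.
have [k def_q] : exists k, q = (2 * k + 1) * 2 + 1 by exists (q %/ 4); lia.
have : (t ^+ ((2 * k + 1) * 2 + 1) = t)%R.
  by rewrite -def_q -[X in (_ ^+ X)%R](card_Fp q_pr) expf_card.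
rewrite addn1 exprSr mulnC exprM t_sq -signr_odd addn1 oddS oddM andFb expr1 mulN1r.
move/eqP; rewrite eq_sym -subr_eq0 opprK -mulr2n -mulr_natr mulf_eq0.
case/orP => [/eqP t0 | ].
  by move: t_sq; rewrite t0 expr0n => /eqP; rewrite eq_sym oppr_eq0 oner_eq0.
by rewrite -(dvdn_pcharf q_char) => /dvdn_leq; lia.
Qed.

Lemma prime_ndvd_add_coprime q e d :
  prime q -> coprime e d -> q %| d -> ~~ (q %| e + d).
Proof.
move=> q_pr co_ed q_dvd_d.
by rewrite dvdn_addl // -prime_coprime // coprime_sym (coprime_dvdr q_dvd_d).
Qed.

Lemma pair_eqn_delta_even e d f M :
  coprime e d -> ~~ odd d -> ~~ (3 %| d) -> ~ pair_eqn e d f M.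
Proof.
move=> co_ed d_even d_n3 eqM.
have e_odd : odd e by rewrite -coprimen2 (coprime_dvdr _ co_ed) // dvdn2.
have [q q_pr /andP[q_dvd /eqP q_mod4]] :
    exists2 q, prime q & (q %| 3 * (e + d) ^ 2 + d ^ 2) && (q %% 4 == 3).
  apply: prime_divisor_3mod4.
  by have := sqrn_mod4 (e + d); have := sqrn_mod4 d; rewrite oddD e_odd; lia.
have q_n3 : ~~ (q %| 3).
  apply: contra d_n3; rewrite dvdn_prime2 // => /eqP q3.
  by move: q_dvd; rewrite q3 (dvdn_addr _ (dvdn_mulr _ (dvdnn 3))) Euclid_dvdX // andbT.
have q_dvd_sum : q %| (d * f) ^ 2 + (e + d) ^ 2.
  have sum_eq : 3 * ((d * f) ^ 2 + (e + d) ^ 2) = (M + 1) * (3 * (e + d) ^ 2 + d ^ 2).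
    by move: eqM; rewrite /pair_eqn expnMn; move: ((e + d) ^ 2) (d ^ 2) (f ^ 2); lia.
  have : q %| 3 * ((d * f) ^ 2 + (e + d) ^ 2) by rewrite sum_eq dvdn_mull.
  by rewrite Euclid_dvdM // (negbTE q_n3).
have q_dvd_ed := prime_3mod4_dvd_sum_sq q_pr q_mod4 q_dvd_sum.
have q_dvd_d : q %| d.
  have q_dvd_3ed2 : q %| 3 * (e + d) ^ 2 by rewrite dvdn_mull // Euclid_dvdX // q_dvd_ed.
  by move: q_dvd; rewrite (dvdn_addr _ q_dvd_3ed2) Euclid_dvdX // andbT.
by move: q_dvd_ed; rewrite (negbTE (prime_ndvd_add_coprime q_pr co_ed q_dvd_d)).
Qed.

Lemma pair_eqn_delta_3mod6 e d f M :
  coprime e d -> odd e -> odd d -> 3 %| d -> ~ pair_eqn e d f M.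
Proof.
move=> co_ed e_odd d_odd /dvdnP[c def_d] eqM.
have c_odd : odd c by move: d_odd; rewrite def_d oddM => /andP[].
have [q q_pr /andP[q_dvd /eqP q_mod4]] :
    exists2 q, prime q & (q %| (e + d) ^ 2 + 3 * c ^ 2) && (q %% 4 == 3).
  apply: prime_divisor_3mod4.
  by have := sqrn_mod4 (e + d); have := sqrn_mod4 c; rewrite oddD e_odd d_odd; lia.
have q_dvd_sum : q %| (d * f) ^ 2 + (e + d) ^ 2.
  have -> : (d * f) ^ 2 + (e + d) ^ 2 = (M + 1) * ((e + d) ^ 2 + 3 * c ^ 2).
    have d_sq : d ^ 2 = 3 * (3 * c ^ 2) by rewrite def_d; lia.
    by move: eqM; rewrite /pair_eqn expnMn d_sq; move: ((e + d) ^ 2) (c ^ 2) (f ^ 2); lia.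
  by rewrite dvdn_mull.
have q_dvd_ed := prime_3mod4_dvd_sum_sq q_pr q_mod4 q_dvd_sum.
have q_dvd_d : q %| d.
  have q_dvd_ed2 : q %| (e + d) ^ 2 by rewrite Euclid_dvdX // q_dvd_ed.
  move: q_dvd; rewrite (dvdn_addr _ q_dvd_ed2) (_ : 3 * c ^ 2 = d * c); last by rewrite def_d; lia.
  by rewrite Euclid_dvdM // => /orP[// | q_dvd_c]; rewrite def_d dvdn_mulr.
by move: q_dvd_ed; rewrite (negbTE (prime_ndvd_add_coprime q_pr co_ed q_dvd_d)).
Qed.

Definition all_residues4 n (P : nat -> nat -> nat -> nat -> bool) : bool :=
  all (fun a => all (fun b => all (fun c => all (P a b c) (iota 0 n)) (iota 0 n))
    (iota 0 n)) (iota 0 n).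

Lemma all_residues4P n P :
  all_residues4 n P -> 0 < n -> forall a b c d, P (a %% n) (b %% n) (c %% n) (d %% n).
Proof.
move=> all_P n_gt0 a b c d; have mem x : x %% n \in iota 0 n by rewrite mem_iota ltn_pmod.
by move/allP/(_ _ (mem a))/allP/(_ _ (mem b))/allP/(_ _ (mem c))/allP/(_ _ (mem d)): all_P.
Qed.

Definition pair_eqn_mod (n e d f M : nat) : bool :=
  (M%:R * (3 * (e%:R + d%:R) ^+ 2 + d%:R ^+ 2) + d%:R ^+ 2 == 3 * d%:R ^+ 2 * f%:R ^+ 2
    :> 'Z_n)%R.

Lemma pair_eqn_residues n e d f M : 1 < n -> pair_eqn e d f M ->
  pair_eqn_mod n (e %% n) (d %% n) (f %% n) (M %% n).
Proof.
move=> n_gt1 /(congr1 (fun a => (a%:R : 'Z_n)%R)).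
by rewrite /= !(natrD, natrM, natrX) => eqZ; rewrite /pair_eqn_mod !Zp_nat_mod // eqZ.
Qed.

Lemma pair_eqn_odd e d f M : coprime e d -> pair_eqn e d f M -> odd e.
Proof.
move=> co_ed eqM; have [d_odd | d_even] := boolP (odd d); last first.
  by rewrite -coprimen2 (coprime_dvdr _ co_ed) // dvdn2.
have /all_residues4P/(_ isT e d f M) : all_residues4 4 (fun e d f M =>
  [|| odd e, ~~ odd d | ~~ pair_eqn_mod 4 e d f M]) by vm_compute.
by rewrite /= !odd_mod // d_odd (pair_eqn_residues _ eqM) // orbF.
Qed.

Lemma pair_eqn_delta_mod6 e d f M :
  coprime e d -> pair_eqn e d f M -> d %% 6 \in [:: 0; 1; 5].
Proof.
move=> co_ed eqM; have e_odd := pair_eqn_odd co_ed eqM.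
have [d_odd | d_even] := boolP (odd d); have [d3 | d_n3] := boolP (3 %| d);
  rewrite !inE; try lia.
  by case: (pair_eqn_delta_3mod6 co_ed e_odd d_odd d3 eqM).
by case: (pair_eqn_delta_even co_ed d_even d_n3 eqM).
Qed.

Lemma pair_eqn_mod8 e d f M : odd e -> odd d -> pair_eqn e d f M ->
  (odd f -> M %% 8 = 2) /\ (~~ odd f -> M %% 4 = 3).
Proof.
move=> e_odd d_odd eqM.
have /all_residues4P/(_ isT e d f M) : all_residues4 8 (fun e d f M =>
  odd e ==> odd d ==> pair_eqn_mod 8 e d f M ==>
  if odd f then M == 2 else M %% 4 == 3) by vm_compute.
rewrite /= !odd_mod // e_odd d_odd (pair_eqn_residues _ eqM) // modn_dvdm //.
by case: (odd f) => /eqP M_mod; split.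
Qed.

Lemma pair_eqn_mod9 e d f M : d %% 3 != 0 -> pair_eqn e d f M ->
  M %% 9 = if f %% 3 == 0 then (if (e + d) %% 3 == 0 then 8 else 2)
           else (if (e + d) %% 3 == 0 then 2 else 5).
Proof.
move=> d_mod3 eqM.
have /all_residues4P/(_ isT e d f M) : all_residues4 9 (fun e d f M =>
  (d %% 3 != 0) ==> pair_eqn_mod 9 e d f M ==>
  (M == if f %% 3 == 0 then (if (e + d) %% 3 == 0 then 8 else 2)
        else (if (e + d) %% 3 == 0 then 2 else 5))) by vm_compute.
have -> : (e %% 9 + d %% 9) %% 3 = (e + d) %% 3 by lia.
by rewrite /= !modn_dvdm // d_mod3 (pair_eqn_residues _ eqM) // => /eqP.
Qed.

Definition pair6_eqn (e k f M : nat) : Prop :=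
  M * ((e + 6 * k) ^ 2 + 12 * k ^ 2) + k ^ 2 = 3 * k ^ 2 * f ^ 2.

Definition pair6_eqn_mod (n e k f M : nat) : bool :=
  (M%:R * ((e%:R + 6 * k%:R) ^+ 2 + 12 * k%:R ^+ 2) + k%:R ^+ 2 == 3 * k%:R ^+ 2 * f%:R ^+ 2
    :> 'Z_n)%R.

Lemma pair6_eqn_residues n e k f M : 1 < n -> pair6_eqn e k f M ->
  pair6_eqn_mod n (e %% n) (k %% n) (f %% n) (M %% n).
Proof.
move=> n_gt1 /(congr1 (fun a => (a%:R : 'Z_n)%R)).
by rewrite /= !(natrD, natrM, natrX) => eqZ; rewrite /pair6_eqn_mod !Zp_nat_mod // eqZ.
Qed.

Lemma pair_eqn_delta_mul6 e k f M : coprime e 6 -> pair_eqn e (6 * k) f M ->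
  exists2 M1, M = 12 * M1 & pair6_eqn e k f M1.
Proof.
move=> co_e6 eqM; set u := (e + 6 * k) ^ 2 + 12 * k ^ 2.
have eq_u : M * u + 12 * k ^ 2 = 36 * k ^ 2 * f ^ 2.
  by move: eqM; rewrite /pair_eqn /u expnMn; move: ((e + 6 * k) ^ 2) (k ^ 2) (f ^ 2); lia.
have co_u : coprime 12 u.
  rewrite coprime_sym; have -> : u = (e * k + 4 * k ^ 2) * 12 + e ^ 2 by rewrite /u; lia.
  rewrite -coprime_modl modnMDl coprime_modl coprime_pexpl //.
  by rewrite (_ : 12 = 6 * 2) // coprimeMr co_e6 (coprime_dvdr _ co_e6).
have : 12 %| M * u.
  apply/dvdnP; exists (3 * k ^ 2 * f ^ 2 - k ^ 2).
  by move: eq_u; move: (M * u) (k ^ 2) (f ^ 2); lia.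
rewrite Gauss_dvdl // => /dvdnP[M1 def_M].
exists M1; first by rewrite mulnC.
by move: eq_u; rewrite /pair6_eqn -/u def_M mulnAC; move: (M1 * u) (k ^ 2) (f ^ 2); lia.
Qed.

Lemma pair6_eqn_mod4 e k f M : odd e -> pair6_eqn e k f M ->
  [/\ ~~ odd k -> M %% 4 = 0, odd k -> odd f -> M %% 4 = 2 & odd k -> ~~ odd f -> odd M].
Proof.
move=> e_odd eqM.
have /all_residues4P/(_ isT e k f M) : all_residues4 4 (fun e k f M =>
  odd e ==> pair6_eqn_mod 4 e k f M ==>
  if ~~ odd k then M == 0 else if odd f then M == 2 else odd M) by vm_compute.
rewrite /= !odd_mod // e_odd (pair6_eqn_residues _ eqM) //.
by case: (odd k); case: (odd f) => /= M_mod; split => //; lia.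
Qed.

Lemma pair6_eqn_mod9 e k f M : e %% 3 != 0 -> pair6_eqn e k f M ->
  (k %% 3 = 0 -> M %% 9 = 0) /\ (k %% 3 != 0 -> M %% 3 = 2).
Proof.
move=> e_mod3 eqM.
have /all_residues4P/(_ isT e k f M) : all_residues4 9 (fun e k f M =>
  (e %% 3 != 0) ==> pair6_eqn_mod 9 e k f M ==>
  if k %% 3 == 0 then M == 0 else M %% 3 == 2) by vm_compute.
rewrite /= !modn_dvdm // e_mod3 (pair6_eqn_residues _ eqM) //.
by case: eqP => k_mod3 /eqP M_mod; split.
Qed.

Lemma pair_eqn_delta_0mod6 e d f M :
  coprime e d -> d %% 6 = 0 -> M %% 8 != 4 -> pair_eqn e d f M ->
  M %% 12 = 0 /\
  ([/\ d %% 36 = 0, e %% 6 \in [:: 1; 5] & M %% 144 = 0]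
   \/ [/\ d %% 36 \in [:: 12; 24], e %% 6 \in [:: 1; 5] & M %% 144 = 96]
   \/ [/\ d %% 36 \in [:: 6; 30], e %% 6 \in [:: 1; 5], odd f & M %% 144 = 24]
   \/ [/\ d %% 36 = 18, e %% 6 \in [:: 1; 5], odd f & M %% 144 = 72]).
Proof.
move=> co_ed d_mod6 M_mod8 eqM.
have [k def_d] : exists k, d = 6 * k by exists (d %/ 6); lia.
have co_e6 : coprime e 6 by rewrite (coprime_dvdr _ co_ed) // def_d dvdn_mulr.
have e_odd : odd e by rewrite -coprimen2 (coprime_dvdr _ co_e6).
have e_mod3 : e %% 3 != 0.
  by move: (coprime_dvdr (isT : 3 %| 6) co_e6); rewrite coprime_sym prime_coprime //; lia.
have e_mod6 : e %% 6 \in [:: 1; 5] by rewrite !inE; lia.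
rewrite def_d in eqM *; have [M1 def_M eqM1] := pair_eqn_delta_mul6 co_e6 eqM; subst M.
have [M1_even M1_2mod4 M1_odd] := pair6_eqn_mod4 e_odd eqM1.
have [M1_9 M1_2mod3] := pair6_eqn_mod9 e_mod3 eqM1.
split; first lia.
(* For k odd and f even, M / 12 is odd: this is excluded by M <> 4 (mod 8). *)
have [k_mod6 | [k_mod6 | [k_mod6 | k_mod6]]] :
  k %% 6 = 0 \/ (~~ odd k /\ k %% 3 != 0) \/ (odd k /\ k %% 3 != 0) \/ (odd k /\ k %% 3 = 0).
  by lia.
- by left; split => //; rewrite ?inE; lia.
- by right; left; split => //; rewrite ?inE; lia.
- by right; right; left; split => //; rewrite ?inE; lia.
- by right; right; right; split => //; rewrite ?inE; lia.
Qed.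

Theorem theorem1 (eta delta M f : nat) :
  1 < eta -> 1 < delta -> 1 < M -> 0 < f -> coprime eta delta ->
  (* (delta f)^2 - M (eta+delta)^2 = delta^2 (M+1)/3, multiplied by 3 *)
  3 * (delta * f) ^ 2 = 3 * (M * (eta + delta) ^ 2) + delta ^ 2 * (M + 1) ->
  consec_sq_square M ->
  [/\ odd eta,
      delta %% 6 \in [:: 0; 1; 5],
      (delta %% 6 = 0 -> M %% 12 = 0),
      (delta %% 6 \in [:: 1; 5] ->
         (odd f -> M %% 12 = 2) /\ (~~ odd f -> M %% 12 = 11)) &
      ((* (a) *)
          [/\ delta %% 36 = 0, eta %% 6 \in [:: 1; 5] & M %% 144 = 0]
        \/ (* (b) *)
          [/\ delta %% 36 \in [:: 12; 24], eta %% 6 \in [:: 1; 5] & M %% 144 = 96]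
        \/ (* (c) *)
          [/\ delta %% 36 \in [:: 6; 30], eta %% 6 \in [:: 1; 5], odd f & M %% 144 = 24]
        \/ (* (d) *)
          [/\ delta %% 36 = 18, eta %% 6 \in [:: 1; 5], odd f & M %% 144 = 72]
        \/ (* (e) *)
          [/\ delta %% 6 = 1,
              (f %% 6 \in [:: 1; 5] ->
                 (eta %% 6 \in [:: 1; 3] -> M %% 72 = 50) /\ (eta %% 6 = 5 -> M %% 72 = 2)),
              (f %% 6 = 3 ->
                 (eta %% 6 \in [:: 1; 3] -> M %% 72 = 2) /\ (eta %% 6 = 5 -> M %% 72 = 26)),
              (f %% 6 = 0 ->
                 (eta %% 6 \in [:: 1; 3] -> M %% 36 = 11) /\ (eta %% 6 = 5 -> M %% 36 = 35)) &
              (f %% 6 \in [:: 2; 4] ->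
                 (eta %% 6 \in [:: 1; 3] -> M %% 36 = 23) /\ (eta %% 6 = 5 -> M %% 36 = 11))]
        \/ (* (f) *)
          [/\ delta %% 6 = 5,
              (f %% 6 \in [:: 1; 5] ->
                 (eta %% 6 = 1 -> M %% 72 = 2) /\ (eta %% 6 \in [:: 3; 5] -> M %% 72 = 50)),
              (f %% 6 = 3 ->
                 (eta %% 6 = 1 -> M %% 72 = 26) /\ (eta %% 6 \in [:: 3; 5] -> M %% 72 = 2)),
              (f %% 6 = 0 ->
                 (eta %% 6 = 1 -> M %% 36 = 35) /\ (eta %% 6 \in [:: 3; 5] -> M %% 36 = 11)) &
              (f %% 6 \in [:: 2; 4] ->
                 (eta %% 6 = 1 -> M %% 36 = 11) /\ (eta %% 6 \in [:: 3; 5] -> M %% 36 = 23))])].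
Proof.
move=> _ _ _ _ co_ed def_M sq.
have {def_M} eqM : pair_eqn eta delta f M.
  by move: def_M; rewrite /pair_eqn expnMn; move: ((eta + delta) ^ 2) (delta ^ 2) (f ^ 2); lia.
have eta_odd := pair_eqn_odd co_ed eqM.
have delta_mod6 := pair_eqn_delta_mod6 co_ed eqM.
have M_mod8 := consec_sq_square_mod8 sq.
have [delta_0mod6 | delta_n0mod6] := eqVneq (delta %% 6) 0.
  have [M_mod12 cases_0mod6] := pair_eqn_delta_0mod6 co_ed delta_0mod6 M_mod8 eqM.
  by split => //; [rewrite delta_0mod6 | tauto].
have [delta_odd delta_mod3] : odd delta /\ delta %% 3 != 0.
  by move: delta_mod6; rewrite !inE; lia.
have [M_mod8_fodd M_mod4_feven] := pair_eqn_mod8 eta_odd delta_odd eqM.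
have := pair_eqn_mod9 delta_mod3 eqM.
case: eqP => f_mod3; case: eqP => sum_mod3 M_mod9.
all: split => //; [lia | move=> _; split => ?; lia | do 4 right].
all: case: (eqVneq (delta %% 6) 1) => delta_mod6_1; [left | right].
all: split; first by move: delta_mod6; rewrite !inE; lia.
all: rewrite ?inE => f_mod6; split; rewrite ?inE => eta_mod6; lia.
Qed.
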